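(* Let $A=KQ/I$ be a finite-dimensional gentle algebra and let $C=c_1\cdots c_m$ be a string for $A$ with an intersecting auto-reaching given by substrings $C[i,j]$ and $C[i',j']$. Then the two substrings are oriented in the same direction in $C$: the word $c_i\cdots c_{j-1}$ equals the word $c_{i'}\cdots c_{j'-1}$, and $C[i,j]$ is not the inverse walk of $C[i',j']$.
   Context: Letters are arrows $\alpha\in Q_1$ (direct, traversed from $s(\alpha)$ to $t(\alpha)$) and formal inverses $\alpha^{-1}$ (inverse, traversed from $t(\alpha)$ to $s(\alpha)$). A string is a reduced walk (no letter followed by its own inverse) in $Q$ avoiding the relations of $I$ and their inverses; it is identified with its inverse walk. For $C=c_1\cdots c_m$ with vertex positions $v_1,\dots,v_{m+1}$ and $1\le i\le j\le m+1$, $C[i,j]=c_i\cdots c_{j-1}$ (the trivial string at $v_i$ if $i=j$). $C[i,j]$ is on top of $C$ if ($i=1$ or $c_{i-1}$ is inverse) and ($j=m+1$ or $c_j$ is direct); it is at the bottom of $C$ if ($i=1$ or $c_{i-1}$ is direct) and ($j=m+1$ or $c_j$ is inverse). An auto-reaching of $C$ is given by a substring $C[i,j]$ on top of $C$ and a substring $C[i',j']$ at the bottom of $C$ which are equal as strings (equal or mutually inverse walks) and satisfy the swinging arms condition: if $i'=1$ then $i\neq1$, and if $j'=m+1$ then $j\ne m+1$. It is intersecting if $i<i'\le j<j'$ or $i'<i\le j'<j$. *)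

From HB Require Import structures.
From mathcomp Require Import all_boot.
Set Implicit Arguments.
Unset Strict Implicit.
Unset Printing Implicit Defensive.

(* A bound quiver (Q, I) with I generated by paths of length two.
   Q0 = V, Q1 = Ar, s, t source and target.  rel a b (for t a = s b) means
   that the length-two path "a then b" (traversed from s a to t b) is one of
   the generating relations of I. *)
Record bquiver := BQuiver {
  V : finType;
  Ar : finType;
  src : Ar -> V;
  tgt : Ar -> V;
  rel : Ar -> Ar -> bool;
  rel_comp : forall a b, rel a b -> tgt a = src b
}.

Section Strings.
Variable Q : bquiver.

Fixpoint path_ok (p : seq (Ar Q)) : bool :=
  match p with
  | a :: ((b :: _) as p') => [&& tgt a == src b, ~~ rel a b & path_ok p']
  | _ => true
  end.

Definition gentle : Prop :=
  (forall v : V Q, #|[pred a | src a == v]| <= 2) /\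
  (forall v : V Q, #|[pred a | tgt a == v]| <= 2) /\
  (forall b : Ar Q, #|[pred a | (tgt a == src b) && rel a b]| <= 1) /\
  (forall b : Ar Q, #|[pred a | (tgt a == src b) && ~~ rel a b]| <= 1) /\
  (forall a : Ar Q, #|[pred b | (tgt a == src b) && rel a b]| <= 1) /\
  (forall a : Ar Q, #|[pred b | (tgt a == src b) && ~~ rel a b]| <= 1) /\
  (* finite dimensionality: paths not in I have bounded length *)
  (exists N, forall p : seq (Ar Q), path_ok p -> size p <= N).

Inductive letter := Dir of Ar Q | Inv of Ar Q.

Definition letter_eqb (x y : letter) : bool :=
  match x, y with
  | Dir a, Dir b => a == b
  | Inv a, Inv b => a == b
  | _, _ => false
  end.
Lemma letter_eqP : Equality.axiom letter_eqb.
Proof.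
by case=> [a|a] [b|b] /=; (try by constructor); apply: (iffP eqP) => [->|[]].
Qed.
HB.instance Definition _ := hasDecEq.Build letter letter_eqP.

Definition lsrc (x : letter) := match x with Dir a => src a | Inv a => tgt a end.
Definition ltgt (x : letter) := match x with Dir a => tgt a | Inv a => src a end.
Definition linv (x : letter) := match x with Dir a => Inv a | Inv a => Dir a end.
Definition is_direct (x : letter) := if x is Dir _ then true else false.
Definition is_inverse (x : letter) := ~~ is_direct x.

Definition step_ok (x y : letter) : bool :=
  [&& ltgt x == lsrc y, y != linv x &
      match x, y with
      | Dir a, Dir b => ~~ rel a b
      | Inv a, Inv b => ~~ rel b a
      | _, _ => true
      end].

Fixpoint steps_ok (w : seq letter) : bool :=
  match w with
  | x :: ((y :: _) as w') => step_ok x y && steps_ok w'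
  | _ => true
  end.

(* a string: a walk w starting at vertex v (w = [::] is the trivial string at v) *)
Definition is_string (v : V Q) (w : seq letter) : bool :=
  match w with
  | [::] => true
  | x :: _ => (lsrc x == v) && steps_ok w
  end.

Definition wend (v : V Q) (w : seq letter) : V Q := last v (map ltgt w).

Definition winv (w : seq letter) : seq letter := rev (map linv w).

(* 1-based notation: C = c_1 ... c_m; v_k = vpos k for 1 <= k <= m+1 *)
Definition vpos (v : V Q) (C : seq letter) (k : nat) : V Q := wend v (take k.-1 C).
(* C[i,j] = c_i ... c_(j-1) *)
Definition sub (C : seq letter) (i j : nat) : seq letter := drop i.-1 (take j.-1 C).
Definition let_at (C : seq letter) (k : nat) (d : letter) := nth d C k.-1.

(* strings (v,w) and (v',w') are equal as strings: equal or mutually inverse walks *)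
Definition str_eq (v : V Q) (w : seq letter) (v' : V Q) (w' : seq letter) : Prop :=
  (v = v' /\ w = w') \/ (v = wend v' w' /\ w = winv w').

Definition inv_at (C : seq letter) (k : nat) : bool :=
  if onth C k.-1 is Some x then (0 < k) && is_inverse x else false.
Definition dir_at (C : seq letter) (k : nat) : bool :=
  if onth C k.-1 is Some x then (0 < k) && is_direct x else false.

Definition on_top (C : seq letter) (i j : nat) : Prop :=
  (i = 1 \/ inv_at C i.-1) /\ (j = (size C).+1 \/ dir_at C j).
Definition at_bottom (C : seq letter) (i j : nat) : Prop :=
  (i = 1 \/ dir_at C i.-1) /\ (j = (size C).+1 \/ inv_at C j).

Definition auto_reaching (v : V Q) (C : seq letter) (i j i' j' : nat) : Prop :=
  (1 <= i <= j) /\ (j <= (size C).+1) /\ (1 <= i' <= j') /\ (j' <= (size C).+1) /\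
  on_top C i j /\ at_bottom C i' j' /\
  str_eq (vpos v C i) (sub C i j) (vpos v C i') (sub C i' j') /\
  (i' = 1 -> i <> 1) /\ (j' = (size C).+1 -> j <> (size C).+1).

Definition intersecting (i j i' j' : nat) : Prop :=
  (i < i' <= j /\ j < j') \/ (i' < i <= j' /\ j' < j).

End Strings.

(* If an occurrence of a factor
   overlaps or abuts an occurrence of its inverse, the union of the two
   occurrences is a nonempty factor of C equal to its own inverse walk.  Its
   middle is then either a letter equal to its own inverse or two consecutive
   letters x, x^-1, and neither can occur in a reduced walk. *)
From mathcomp Require Import all_boot.
From mathcomp Require Import zify.

Section ReducedWalks.
Context {Q : bquiver}.
Implicit Types (x y : letter Q) (w p m r C : seq (letter Q)).

Lemma linvK : involutive (@linv Q).
Proof. by case. Qed.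

Lemma linv_neq x : linv x != x.
Proof. by case: x. Qed.

Lemma winvK : involutive (@winv Q).
Proof. by move=> w; rewrite /winv map_rev revK (mapK linvK). Qed.

Lemma size_winv w : size (winv w) = size w.
Proof. by rewrite size_rev size_map. Qed.

Lemma winv_cat p r : winv (p ++ r) = winv r ++ winv p.
Proof. by rewrite /winv map_cat rev_cat. Qed.

Lemma winv_cons_rcons x w y :
  winv (x :: rcons w y) = linv y :: rcons (winv w) (linv x).
Proof. by rewrite /winv /= map_rcons rev_cons rev_rcons. Qed.

Lemma steps_okE w : steps_ok w = sorted (@step_ok Q) w.
Proof. by elim: w => [|x [|y w] /= IH] //; rewrite IH. Qed.

Lemma steps_ok_self_inverse w : steps_ok w -> winv w = w -> w = [::].
Proof.
have [n] := ubnP (size w); elim: n w => // n IH [|x w] //.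
case/lastP: w => [|u y] size_lt reduced_w.
  by rewrite /winv /= => -[/eqP]; rewrite (negbTE (linv_neq x)).
rewrite winv_cons_rcons => -[_ /eqP]; rewrite eqseq_rcons => /andP[/eqP u_sym /eqP xy].
have reduced_u : steps_ok u.
  move: reduced_w; rewrite !steps_okE => /(drop_sorted 1)/(take_sorted (size u)).
  by rewrite /= drop0 -cats1 take_size_cat.
have u0 : u = [::].
  by apply: IH reduced_u u_sym; move: size_lt; rewrite /= size_rcons; lia.
by move: reduced_w; rewrite u0 -xy /= /step_ok eqxx andbF.
Qed.

Lemma overlap_self_inverse p m r :
  size p = size r -> p ++ m = winv (m ++ r) -> winv (p ++ m ++ r) = p ++ m ++ r.
Proof.
move=> size_pr /eqP; rewrite winv_cat eqseq_cat ?size_winv //.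
by case/andP=> /eqP-> /eqP m_sym; rewrite !winv_cat winvK -m_sym catA.
Qed.

Lemma subE C a b : 0 < a <= b -> sub C a b = take (b - a) (drop a.-1 C).
Proof. by move=> ab; rewrite take_drop /sub; congr (drop _ (take _ _)); lia. Qed.

Lemma size_sub C a b : 0 < a <= b -> b <= (size C).+1 -> size (sub C a b) = b - a.
Proof. by move=> ab bC; rewrite subE // size_takel // size_drop; lia. Qed.

Lemma sub_cat C a k b : 0 < a <= k -> k <= b -> sub C a b = sub C a k ++ sub C k b.
Proof.
move=> ak kb; rewrite !subE //; try lia.
have -> : drop k.-1 C = drop (k - a) (drop a.-1 C) by rewrite drop_drop; congr drop; lia.
by rewrite -takeD; congr take; lia.
Qed.

Lemma steps_ok_sub C a b : steps_ok C -> 0 < a <= b -> steps_ok (sub C a b).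
Proof. by move=> + ab; rewrite subE // !steps_okE => /(drop_sorted a.-1)/take_sorted. Qed.

Lemma winv_sub_neq C a b :
  steps_ok C -> 0 < a < b -> b <= (size C).+1 -> winv (sub C a b) <> sub C a b.
Proof.
move=> reduced_C ab bC self_inverse.
have reduced_sub : steps_ok (sub C a b) by apply: steps_ok_sub => //; lia.
have := congr1 size (steps_ok_self_inverse _ reduced_sub self_inverse).
by rewrite size_sub //=; lia.
Qed.

Lemma sub_neq_winv_overlap C a b a' b' :
  steps_ok C -> 0 < a -> a < a' <= b -> b < b' -> b' <= (size C).+1 ->
  sub C a b <> winv (sub C a' b').
Proof.
move=> reduced_C a0 a'b bb' b'C E.
have size_eq : b - a = b' - a'.
  by have := congr1 size E; rewrite size_winv !size_sub //; lia.
have split : sub C a b' = sub C a a' ++ sub C a' b ++ sub C b b'.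
  by rewrite (sub_cat C a a' b') ?(sub_cat C a' b b') //; lia.
apply: (winv_sub_neq C a b') => //; first lia.
rewrite split; apply: overlap_self_inverse; first by rewrite !size_sub //; lia.
by rewrite -!sub_cat //; lia.
Qed.

End ReducedWalks.

Theorem mainTheorem7 (Q : bquiver) (v : V Q) (C : seq (letter Q))
    (i j i' j' : nat) :
  gentle Q ->
  is_string v C ->
  auto_reaching v C i j i' j' ->
  intersecting i j i' j' ->
  sub C i j = sub C i' j' /\ sub C i j <> winv (sub C i' j').
Proof.
move=> _ string_C [ij [jC [ij' [j'C [_ [_ [equal_strings _]]]]]]] cross.
have reduced_C : steps_ok C by case: (C) string_C => //= x C' /andP[].
case: equal_strings => [[_ same] | [_ inverse]].
  split=> // self_inverse.
  apply: (winv_sub_neq C i j) => //; first by case: cross; lia.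
  by rewrite {2}self_inverse -same.
exfalso; case: cross => [[]|[]] /andP[lt_i le_j] lt_j.
  by move: inverse; apply: sub_neq_winv_overlap => //; lia.
have inverse' : sub C i' j' = winv (sub C i j) by rewrite inverse winvK.
by move: inverse'; apply: sub_neq_winv_overlap => //; lia.
Qed.
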